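(* Let $\{X_k(m): m\in\mathbb{R}_+,\ k\in\mathbb{N}\}$ be a family of integrable real random variables on a probability space $(\Omega,\mathcal F,\mathbb P)$ that are independent in $k$. Assume: (C) $\mathbb{E}[X_k(m)]=0$ for all $m\in\mathbb{R}_+$, $k\in\mathbb{N}$; (W1) for every $\varepsilon>0$, $\lim_{m\to\infty}\sup_k \mathbb{P}(|X_k(m)|>\varepsilon)=0$; (W2) $\lim_{A\to\infty}\sup_{k,m}\mathbb{E}\big[|X_k(m)|\mathbf 1_{\{|X_k(m)|>A\}}\big]=0$. Then for every sequence $\mathbf m=(m_k)_{k\in\mathbb N}$ of positive reals with $\sum_{k}m_k=\infty$, setting $M_n=\sum_{k=1}^n m_k$ and $S_n=\sum_{k=1}^n \frac{m_k}{M_n}X_k(m_k)$, we have $\lim_{n\to\infty}\mathbb{P}(|S_n|>\varepsilon)=0$ for every $\varepsilon>0$.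
   Context: $\mathbb{R}_+$ denotes the positive reals. ''Independent in $k$'' means that the families $\{X_k(m): m\in\mathbb{R}_+\}$ for different $k$ are independent. *)

From HB Require Import structures.
From mathcomp Require Import all_boot all_order all_algebra.
From mathcomp Require Import all_classical all_reals all_analysis.
Set Implicit Arguments. Unset Strict Implicit. Unset Printing Implicit Defensive.
Import Order.TTheory GRing.Theory Num.Theory.
Local Open Scope classical_set_scope.
Local Open Scope ring_scope.

Definition family_sigma d (T : measurableType d) (R : realType)
  (Y : R -> T -> R) : set (set T) :=
  <<s [set E | exists m, 0 < m /\ exists2 B : set R, measurable B & E = Y m @^-1` B] >>.

Definition indep_in_k d (T : measurableType d) (R : realType)
  (P : probability T R) (X : nat -> R -> T -> R) : Prop :=
  forall (s : seq nat) (E : nat -> set T), uniq s ->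
    (forall k, k \in s -> family_sigma (X k) (E k)) ->
    P (\big[setI/setT]_(k <- s) E k) = (\prod_(k <- s) P (E k))%E.

From HB Require Import structures.
From mathcomp Require Import all_boot all_order all_algebra.
From mathcomp Require Import all_classical all_reals all_analysis.
From mathcomp Require Import measurable_realfun.
From mathcomp Require Import lra ring.
Import Order.TTheory GRing.Theory Num.Theory.
Local Open Scope classical_set_scope.
Local Open Scope ring_scope.

(* Fix eps = 2a and a small r. Replace each summand Z_k = X_k(m_k) by U_k = g(Z_k),
   where g is a staircase of step r: a finite combination of indicators of
   intervals, within r of the identity on [-A, A) and zero outside. Independence
   is only available for events, which is exactly what products of such simple
   functions of independent variables need: E[U_k U_l] = E[U_k] E[U_l]. Hence
   E[(sum_k w_k U_k)^2] <= (sum_k w_k E U_k)^2 + sum_k w_k^2 E[U_k^2], and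
   Chebyshev bounds the probability that the truncated sum exceeds a. By (W2),
   E|Z_k - U_k| <= r + E[|Z_k| 1{|Z_k| > B}] is uniformly small once A > B; this
   bounds both the bias |E U_k| = |E (Z_k - U_k)| (by (C)) and, through Markov,
   the probability that the remainder exceeds a. Finally E[U_k^2] <= A^2 always,
   and E[U_k^2] <= 4 r^2 + A^2 P(|Z_k| > r) is small when m_k is large by (W1);
   the summands with small m_k carry total squared weight O(1 / M_n). *)

Section real_expectation.
Context {d} {T : measurableType d} {R : realType} (P : probability T R).
Implicit Types (f g : T -> R) (A : set T).

(* [fine] sends infinite values to 0: [Ex f] is meaningful for integrable [f]. *)
Definition Ex f : R := fine 'E_P[f].
Definition pr A : R := fine (P A).

Lemma prE A : measurable A -> P A = (pr A)%:E.
Proof.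
move=> mA; rewrite /pr fineK// ge0_fin_numE//.
by rewrite (le_lt_trans (probability_le1 P mA)) ?ltry.
Qed.

Lemma pr_ge0 A : 0 <= pr A.
Proof. exact/fine_ge0/measure_ge0. Qed.

Lemma le_pr A B : measurable A -> measurable B -> A `<=` B -> pr A <= pr B.
Proof. by move=> mA mB AB; rewrite -lee_fin -!prE//; apply: le_measure; rewrite ?inE. Qed.

Lemma prU2 A B : measurable A -> measurable B -> pr (A `|` B) <= pr A + pr B.
Proof. by move=> mA mB; rewrite -lee_fin EFinD -!prE ?measureU2//; exact: measurableU. Qed.

Lemma measurable_ge_set t {f} : measurable_fun setT f -> measurable [set x | t <= f x].
Proof. by move=> mf; rewrite -preimage_itvcy -[_ @^-1` _]setTI; exact: mf. Qed.

Lemma measurable_gt_set t {f} : measurable_fun setT f -> measurable [set x | t < f x].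
Proof. by move=> mf; rewrite -preimage_itvoy -[_ @^-1` _]setTI; exact: mf. Qed.

Lemma Lfun1_measurable {f} : f \in Lfun P 1 -> measurable_fun setT f.
Proof. by move/sub_Lfun_mfun; rewrite inE. Qed.

Lemma Lfun1_cst (c : R) : (fun _ => c) \in Lfun P 1.
Proof. exact: Lfun_cst. Qed.

Lemma Lfun1_dominated f g : measurable_fun setT f -> g \in Lfun P 1 ->
  (forall x, `|f x| <= `|g x|) -> f \in Lfun P 1.
Proof.
move=> mf /Lfun1_integrable ig fg; apply/Lfun1_integrable.
apply: le_integrable ig => //; first exact/measurable_EFinP.
by move=> x _; rewrite lee_fin.
Qed.

Lemma Lfun1_bounded f (M : R) : measurable_fun setT f ->
  (forall x, `|f x| <= M) -> f \in Lfun P 1.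
Proof.
move=> mf fM; apply: (Lfun1_dominated _ _ mf (Lfun1_cst M)) => x.
exact: le_trans (fM x) (ler_norm _).
Qed.

Lemma Lfun1_indic A : measurable A -> \1_A \in Lfun P 1.
Proof.
move=> mA; apply: (@Lfun1_bounded _ 1) => [|x]; first exact: measurable_indic.
by rewrite indicE; case: (x \in A); rewrite ?normr1 ?normr0.
Qed.

Lemma Lfun1_sum (I : eqType) (s : seq I) (F : I -> T -> R) :
  (forall i, i \in s -> F i \in Lfun P 1) ->
  (fun x => \sum_(i <- s) F i x) \in Lfun P 1.
Proof. by move=> lF; rewrite -fct_sumE big_seq rpred_sum. Qed.

Lemma ExD f g : f \in Lfun P 1 -> g \in Lfun P 1 ->
  Ex (fun x => f x + g x) = Ex f + Ex g.
Proof. by move=> lf lg; rewrite /Ex (expectationD lf lg) fineD ?expectation_fin_num. Qed.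

Lemma ExZ (k : R) f : f \in Lfun P 1 -> Ex (fun x => k * f x) = k * Ex f.
Proof.
move=> lf; rewrite /Ex -[k]/(fine k%:E) -fineM ?expectation_fin_num// -expectationZl//.
by congr (fine 'E_P[_]); apply: funext => x; rewrite /= mulrC.
Qed.

Lemma Ex_cst (c : R) : Ex (fun _ => c) = c.
Proof. by rewrite /Ex expectation_cst. Qed.

Lemma Ex_indic A : measurable A -> Ex \1_A = pr A.
Proof. by move=> mA; rewrite /Ex expectation_indic. Qed.

Lemma Ex_sum (I : eqType) (s : seq I) (F : I -> T -> R) :
  (forall i, i \in s -> F i \in Lfun P 1) ->
  Ex (fun x => \sum_(i <- s) F i x) = \sum_(i <- s) Ex (F i).
Proof.
elim: s => [|i s IH] lF; first by under eq_fun do rewrite big_nil; rewrite big_nil Ex_cst.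
have lFs j : j \in s -> F j \in Lfun P 1 by move=> js; rewrite lF// inE js orbT.
under eq_fun do rewrite big_cons.
by rewrite big_cons ExD ?IH ?Lfun1_sum ?lF ?mem_head.
Qed.

Lemma Ex_ge0 f : (forall x, 0 <= f x) -> 0 <= Ex f.
Proof. by move=> f0; apply/fine_ge0/expectation_ge0. Qed.

Lemma ler_Ex f g : f \in Lfun P 1 -> g \in Lfun P 1 ->
  (forall x, f x <= g x) -> Ex f <= Ex g.
Proof.
move=> lf lg fg; rewrite -subr_ge0 -mulN1r -ExZ// -ExD ?rpredZ//.
by apply: Ex_ge0 => x; rewrite mulN1r subr_ge0.
Qed.

Lemma ler_norm_Ex f : f \in Lfun P 1 -> `|Ex f| <= Ex (fun x => `|f x|).
Proof.
move=> lf; have lnf : (fun x => `|f x|) \in Lfun P 1 by exact: Lfun_norm.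
rewrite ler_norml -mulN1r -ExZ//; apply/andP; split; apply: ler_Ex => //.
- exact: rpredZ.
- by move=> x; rewrite mulN1r lerNl -normrN ler_norm.
- by move=> x; exact: ler_norm.
Qed.

Lemma markov_Ex f (t : R) : f \in Lfun P 1 -> (forall x, 0 <= f x) -> 0 < t ->
  pr [set x | t <= f x] <= Ex f / t.
Proof.
move=> lf f0 t0; have mS := measurable_ge_set t (Lfun1_measurable lf).
rewrite ler_pdivlMr// mulrC -Ex_indic// -ExZ ?Lfun1_indic//.
rewrite ler_Ex ?rpredZ ?Lfun1_indic// => x.
by rewrite indicE; case: (boolP (x \in _)) => [/set_mem/=|_]; rewrite ?mulr1 ?mulr0.
Qed.

Lemma chebyshev_Ex f (t : R) : measurable_fun setT f ->
  (fun x => f x ^+ 2) \in Lfun P 1 -> 0 < t ->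
  pr [set x | t <= `|f x|] <= Ex (fun x => f x ^+ 2) / t ^+ 2.
Proof.
move=> mf lf2 t0; have -> : [set x | t <= `|f x|] = [set x | t ^+ 2 <= f x ^+ 2].
  apply: eq_set => x; rewrite -[f x ^+ 2]real_normK ?num_real//.
  by rewrite ler_sqr// nnegrE ltW.
by apply: markov_Ex; rewrite ?exprn_gt0// => x; exact: sqr_ge0.
Qed.

End real_expectation.

Section indicator_combination.
Context {R : realType} {I : Type} (s : seq I) (c : I -> R) (B : I -> set R).

Definition indic_comb (x : R) : R := \sum_(i <- s) c i * \1_(B i) x.

Hypothesis mB : forall i, measurable (B i).

Lemma measurable_indic_comb : measurable_fun setT indic_comb.
Proof.
by apply: measurable_sum => i; apply: measurable_funM => //; exact: measurable_indic.
Qed.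

Lemma norm_indic_comb_le x : `|indic_comb x| <= \sum_(i <- s) `|c i|.
Proof.
apply: le_trans (ler_norm_sum _ _ _) _; apply: ler_sum => i _.
rewrite normrM ler_piMr// indicE.
by case: (x \in B i); rewrite ?normr1 ?normr0.
Qed.

End indicator_combination.

Definition indep2 {d} {T : measurableType d} {R : realType} (P : probability T R)
    (Z1 Z2 : T -> R) : Prop :=
  forall B C, measurable B -> measurable C ->
    P (Z1 @^-1` B `&` Z2 @^-1` C) = (P (Z1 @^-1` B) * P (Z2 @^-1` C))%E.

Section indicator_combination_expectation.
Context {d} {T : measurableType d} {R : realType} (P : probability T R).

Lemma measurable_preimage {Z : T -> R} (A : set R) :
  measurable_fun setT Z -> measurable A -> measurable (Z @^-1` A).
Proof. by move=> mZ mA; rewrite -[_ @^-1` _]setTI; exact: mZ. Qed.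

Lemma indic_comb_comp (J : Type) (s : seq J) c B (Z : T -> R) :
  (fun x => indic_comb s c B (Z x)) = (fun x => \sum_(i <- s) c i * \1_(Z @^-1` B i) x).
Proof. by apply: funext => x; apply: eq_bigr => i _; rewrite !indicE. Qed.

Lemma Lfun1_indic_comb (J : Type) (s : seq J) c B (Z : T -> R) :
  measurable_fun setT Z -> (forall i, measurable (B i)) ->
  (fun x => indic_comb s c B (Z x)) \in Lfun P 1.
Proof.
move=> mZ mB; apply: (Lfun1_bounded P _ (\sum_(i <- s) `|c i|)).
  exact: measurableT_comp (measurable_indic_comb s c B mB) mZ.
by move=> x; exact: norm_indic_comb_le.
Qed.

Lemma Ex_indic_comb (J : eqType) (s : seq J) c B (Z : T -> R) :
  measurable_fun setT Z -> (forall i, measurable (B i)) ->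
  Ex P (fun x => indic_comb s c B (Z x)) = \sum_(i <- s) c i * pr P (Z @^-1` B i).
Proof.
move=> mZ mB; have mZB i := measurable_preimage (B i) mZ (mB i).
rewrite indic_comb_comp Ex_sum => [|i _]; last exact/rpredZ/Lfun1_indic.
by apply: eq_bigr => i _; rewrite ExZ ?Ex_indic ?Lfun1_indic.
Qed.

Lemma Ex_indic_combM_indep (J K : eqType) (s : seq J) (t : seq K) c c' B C
    (Z1 Z2 : T -> R) :
  measurable_fun setT Z1 -> measurable_fun setT Z2 -> indep2 P Z1 Z2 ->
  (forall i, measurable (B i)) -> (forall j, measurable (C j)) ->
  Ex P (fun x => indic_comb s c B (Z1 x) * indic_comb t c' C (Z2 x)) =
  Ex P (fun x => indic_comb s c B (Z1 x)) * Ex P (fun x => indic_comb t c' C (Z2 x)).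
Proof.
move=> mZ1 mZ2 indepZ mB mC; rewrite !Ex_indic_comb// big_distrl /=.
pose E i j := Z1 @^-1` B i `&` Z2 @^-1` C j.
have mE i j : measurable (E i j).
  by apply: measurableI; exact: measurable_preimage.
have -> : (fun x => indic_comb s c B (Z1 x) * indic_comb t c' C (Z2 x)) =
    (fun x => \sum_(i <- s) \sum_(j <- t) (c i * c' j) * \1_(E i j) x).
  apply: funext => x; rewrite big_distrl; apply: eq_bigr => i _.
  rewrite big_distrr; apply: eq_bigr => j _.
  by rewrite indicI !indicE mulrACA.
rewrite Ex_sum => [|i _]; last by apply: Lfun1_sum => j _; exact/rpredZ/Lfun1_indic.
apply: eq_bigr => i _; rewrite Ex_sum => [|j _]; last exact/rpredZ/Lfun1_indic.
rewrite big_distrr; apply: eq_bigr => j _ /=.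
rewrite ExZ ?Lfun1_indic// Ex_indic// /pr indepZ// fineM; last 2 first.
- by rewrite (prE P _ (measurable_preimage _ mZ1 (mB i))).
- by rewrite (prE P _ (measurable_preimage _ mZ2 (mC j))).
by rewrite mulrACA.
Qed.

End indicator_combination_expectation.

Lemma indep_in_k_indep2 {d} {T : measurableType d} {R : realType}
    (P : probability T R) (X : nat -> R -> T -> R) k l m m' :
  indep_in_k P X -> k != l -> 0 < m -> 0 < m' -> indep2 P (X k m) (X l m').
Proof.
move=> indepX kl m0 m'0 B C mB mC.
have := indepX [:: k; l] (fun j => if j == k then X k m @^-1` B else X l m' @^-1` C).
rewrite !big_cons !big_nil eqxx eq_sym (negbTE kl) setIT mule1.
apply; first by rewrite /= inE kl.
move=> j; rewrite !inE => /orP[] /eqP->; [rewrite eqxx | rewrite eq_sym (negbTE kl)].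
  by apply: sub_gen_smallest; exists m; split => //; exists B.
by apply: sub_gen_smallest; exists m'; split => //; exists C.
Qed.

Section stair.
Context {R : realType} (r : R) (N : nat).
Hypothesis r_gt0 : 0 < r.

Definition stair_level (a : nat) : R := (a%:R - N%:R) * r.
Definition stair_step (a : nat) : set R := `[stair_level a, stair_level a + r[%classic.
(* On [-N r, N r), [stair x] is the left end of the step of width [r] containing
   [x]; outside it vanishes. *)
Definition stair : R -> R := indic_comb (iota 0 N.*2) stair_level stair_step.

Lemma measurable_stair_step a : measurable (stair_step a).
Proof. exact: measurable_itv. Qed.

Lemma measurable_stair : measurable_fun setT stair.
Proof. exact: measurable_indic_comb measurable_stair_step. Qed.

Lemma mem_stair_step a x :
  (x \in stair_step a) = (a%:R <= (x + N%:R * r) / r < a.+1%:R).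
Proof.
rewrite /stair_step /stair_level ler_pdivlMr// ltr_pdivrMr// -natr1.
by apply/idP/idP; rewrite in_setE /= in_itv /= => /andP[? ?]; apply/andP; split; lra.
Qed.

Lemma stair_out x : x < - (N%:R * r) \/ N%:R * r <= x -> stair x = 0.
Proof.
move=> hx; rewrite /stair /indic_comb big1_seq// => a /andP[_].
rewrite mem_iota add0n => aN; rewrite indicE mem_stair_step.
suff -> : (a%:R <= (x + N%:R * r) / r < a.+1%:R) = false by rewrite mulr0.
apply/negbTE; rewrite negb_and -!ltNge; apply/orP.
case: hx => hx; [left | right; rewrite -leNgt].
  by rewrite (lt_le_trans _ (ler0n _ a))// ltr_pdivrMr// mul0r; lra.
have : (a.+1%:R : R) <= N%:R + N%:R by rewrite -natrD addnn ler_nat.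
by move/(ler_wpM2r (ltW r_gt0)); rewrite ler_pdivlMr//; lra.
Qed.

Lemma stair_in x : - (N%:R * r) <= x < N%:R * r ->
  stair x <= x < stair x + r /\ - (N%:R * r) <= stair x.
Proof.
move=> /andP[h1 h2].
have y0 : 0 <= (x + N%:R * r) / r by rewrite divr_ge0 ?(ltW r_gt0)//; lra.
set a := Num.Def.trunc ((x + N%:R * r) / r).
have aN : (a < N.*2)%N.
  by rewrite truncn_lt_nat// ltr_pdivrMr// -addnn natrD mulrDl ltrD2r.
have xa : x \in stair_step a by rewrite mem_stair_step -truncn_eq.
have -> : stair x = stair_level a.
  rewrite /stair /indic_comb (bigD1_seq a) ?iota_uniq ?mem_iota//= big1 ?addr0.
    by rewrite indicE xa mulr1.
  move=> b ba; rewrite indicE.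
  suff -> : (x \in stair_step b) = false by rewrite mulr0.
  by apply/negbTE; rewrite mem_stair_step -truncn_eq// eq_sym.
move: xa; rewrite /stair_step in_setE /= in_itv /= => /andP[-> ->]; split => //.
have : 0 <= a%:R * r by rewrite mulr_ge0// ltW.
by rewrite /stair_level mulrBl; lra.
Qed.

Lemma stairP x : stair x = 0 \/
  [/\ - (N%:R * r) <= x < N%:R * r, stair x <= x < stair x + r & - (N%:R * r) <= stair x].
Proof.
have [hx|hx] := boolP (- (N%:R * r) <= x < N%:R * r).
  by right; have [? ?] := stair_in _ hx; split.
left; apply: stair_out; move: hx; rewrite negb_and -!ltNge -leNgt.
by case/orP; [left|right].
Qed.

Lemma norm_stair_le x : `|stair x| <= N%:R * r.
Proof.
have Nr0 : 0 <= N%:R * r by rewrite mulr_ge0// ltW.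
have [->|[/andP[? ?] /andP[? ?] ?]] := stairP x; first by rewrite normr0.
by rewrite ler_norml; apply/andP; split; lra.
Qed.

Lemma norm_stair_le_add x : `|stair x| <= `|x| + r.
Proof.
have [->|[/andP[? ?] /andP[? ?] ?]] := stairP x; first by rewrite normr0 addr_ge0// ltW.
have := ler_norm x; have : -x <= `|x| by rewrite -normrN ler_norm.
by rewrite ler_norml; lra.
Qed.

Lemma dist_stair_lt x : `|x| < N%:R * r -> `|x - stair x| <= r.
Proof.
rewrite ltr_norml => /andP[hx1 hx2].
have [|/andP[? ?] _] := stair_in x; first by rewrite (ltW hx1) hx2.
by rewrite ler_norml; apply/andP; split; lra.
Qed.

Lemma dist_stair_le x : `|x - stair x| <= r + `|x|.
Proof.
have [->|[_ /andP[? ?] _]] := stairP x; first by rewrite subr0 lerDr ltW.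
have := normr_ge0 x; rewrite ler_norml; lra.
Qed.

End stair.

Section tail_mean.
Context {d} {T : measurableType d} {R : realType} (P : probability T R).

Definition tail_mean (f : T -> R) (B : R) : R :=
  Ex P (fun x => `|f x| * \1_[set y | B < `|f y|] x).

Lemma Lfun1_tail (f : T -> R) (B : R) : f \in Lfun P 1 ->
  (fun x => `|f x| * \1_[set y | B < `|f y|] x) \in Lfun P 1.
Proof.
move=> lf; have mf := Lfun1_measurable P lf.
apply: (Lfun1_dominated P _ _ _ lf).
  apply: measurable_funM; first exact: measurableT_comp (@normr_measurable R setT) mf.
  by apply/measurable_indic/measurable_gt_set/measurableT_comp; first exact: normr_measurable.
move=> x; rewrite normrM normr_id ler_piMr// indicE.
by case: (_ \in _); rewrite ?normr1 ?normr0.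
Qed.

Lemma tail_meanE (f : T -> R) (B : R) : f \in Lfun P 1 ->
  (tail_mean f B)%:E = (\int[P]_(x in [set x | (B < `|f x|)%R]) (`|f x|)%:E)%E.
Proof.
move=> lf; rewrite /tail_mean /Ex fineK ?expectation_fin_num ?Lfun1_tail//.
rewrite integral_mkcond unlock; apply: eq_integral => x _.
by rewrite /patch indicE; case: ifP; rewrite ?mulr1 ?mulr0.
Qed.

End tail_mean.

Section stair_of_random_variable.
Context {d} {T : measurableType d} {R : realType} (P : probability T R).
Variables (f : T -> R) (r B : R) (N : nat).
Hypotheses (lf : f \in Lfun P 1) (r_gt0 : 0 < r) (B_lt : B < N%:R * r).

Let mf := Lfun1_measurable P lf.
Let Nr_ge0 : 0 <= N%:R * r. Proof. by rewrite mulr_ge0// ltW. Qed.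

Lemma Lfun1_stair_comp : (fun x => stair r N (f x)) \in Lfun P 1.
Proof. exact: (Lfun1_indic_comb P _ _ _ _ _ mf (measurable_stair_step r N)). Qed.

Lemma Lfun1_sqr_stair_comp : (fun x => stair r N (f x) ^+ 2) \in Lfun P 1.
Proof.
apply: (Lfun1_bounded P _ ((N%:R * r) ^+ 2)).
  by apply: measurable_funX; exact: measurableT_comp (measurable_stair r N) mf.
by move=> x; rewrite normrX lerXn2r ?nnegrE// norm_stair_le.
Qed.

Let ltail := Lfun1_tail P _ B lf.

Lemma Ex_dist_stair_le :
  Ex P (fun x => `|f x - stair r N (f x)|) <= r + tail_mean P f B.
Proof.
have ldist : (fun x => `|f x - stair r N (f x)|) \in Lfun P 1.
  exact/Lfun_norm/rpredB/Lfun1_stair_comp.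
rewrite -[r in leRHS](Ex_cst P) -ExD ?ltail ?Lfun1_cst//.
apply: ler_Ex => //; first by rewrite rpredD ?ltail ?Lfun1_cst.
move=> x; have [fx_lt|fx_ge] := ltP `|f x| (N%:R * r).
  by rewrite (le_trans (dist_stair_lt _ _ r_gt0 _ fx_lt))// lerDl mulr_ge0.
rewrite indicE mem_set/= ?mulr1 ?dist_stair_le//.
exact: lt_le_trans B_lt fx_ge.
Qed.

Lemma norm_Ex_stair_le : Ex P f = 0 ->
  `|Ex P (fun x => stair r N (f x))| <= r + tail_mean P f B.
Proof.
move=> Ef0; apply: le_trans Ex_dist_stair_le.
have lU := Lfun1_stair_comp; have lV : (fun x => f x - stair r N (f x)) \in Lfun P 1.
  exact: rpredB.
have : Ex P f = Ex P (fun x => stair r N (f x) + (f x - stair r N (f x))).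
  by congr Ex; apply: funext => x; rewrite addrC subrK.
rewrite ExD// Ef0 => /eqP; rewrite eq_sym addr_eq0 => /eqP ->.
by rewrite normrN ler_norm_Ex.
Qed.

Lemma Ex_sqr_stair_le : Ex P (fun x => stair r N (f x) ^+ 2) <= (N%:R * r) ^+ 2.
Proof.
rewrite -[leRHS](Ex_cst P) ler_Ex ?Lfun1_sqr_stair_comp ?Lfun1_cst// => x.
by rewrite -real_normK ?num_real// lerXn2r ?nnegrE ?norm_stair_le.
Qed.

Lemma Ex_sqr_stair_le_tail : Ex P (fun x => stair r N (f x) ^+ 2) <=
  4 * r ^+ 2 + (N%:R * r) ^+ 2 * pr P [set x | r < `|f x|].
Proof.
have mS : measurable [set x | r < `|f x|].
  by apply/measurable_gt_set/measurableT_comp; first exact: normr_measurable.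
have l4 := Lfun1_cst P (4 * r ^+ 2).
have lind : (fun x => (N%:R * r) ^+ 2 * \1_[set x | r < `|f x|] x) \in Lfun P 1.
  exact/rpredZ/Lfun1_indic.
rewrite -Ex_indic// -ExZ ?Lfun1_indic// -(Ex_cst P (4 * r ^+ 2)) -ExD//.
apply: ler_Ex => [||x]; [exact: Lfun1_sqr_stair_comp|exact: rpredD|].
have U_le := norm_stair_le r N r_gt0 (f x).
rewrite -real_normK ?num_real// indicE; case: (boolP (x \in _)) => [_|fx_le].
  have : `|stair r N (f x)| ^+ 2 <= (N%:R * r) ^+ 2 by rewrite lerXn2r ?nnegrE.
  by rewrite mulr1; have := sqr_ge0 r; lra.
have {fx_le} fx_le : `|f x| <= r by rewrite leNgt; apply: contra fx_le => ?; rewrite mem_set.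
have U_le2r : `|stair r N (f x)| <= 2 * r.
  by have := norm_stair_le_add r N r_gt0 (f x); lra.
have : `|stair r N (f x)| ^+ 2 <= (2 * r) ^+ 2.
  by rewrite lerXn2r ?nnegrE// mulr_ge0// ltW.
by rewrite mulr0 addr0 (_ : (2 * r) ^+ 2 = 4 * r ^+ 2)//; ring.
Qed.

End stair_of_random_variable.

Section weighted_sum.
Context {d} {T : measurableType d} {R : realType} (P : probability T R).
Variables (n : nat) (w : nat -> R) (Z : nat -> T -> R) (r B eta : R) (N : nat).
Hypotheses (w_ge0 : forall k, 0 <= w k) (w_sum1 : \sum_(k < n) w k = 1).
Hypotheses (lZ : forall k, Z k \in Lfun P 1) (EZ0 : forall k, Ex P (Z k) = 0).
Hypothesis indepZ : forall k l, k != l -> indep2 P (Z k) (Z l).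
Hypotheses (r_gt0 : 0 < r) (B_lt : B < N%:R * r).
Hypothesis tailZ : forall k, tail_mean P (Z k) B <= eta.

Let mZ k := Lfun1_measurable P (lZ k).
Let U k x := stair r N (Z k x).
Let V k x := Z k x - U k x.
Let lU k : U k \in Lfun P 1 := Lfun1_stair_comp P _ r N (lZ k).
Let lV k : V k \in Lfun P 1. Proof. exact: rpredB. Qed.

Let convex_comb_le (F : nat -> R) c : (forall k, F k <= c) ->
  \sum_(k < n) w k * F k <= c.
Proof.
move=> Fc; rewrite -[leRHS]mul1r -w_sum1 mulr_suml.
by apply: ler_sum => k _; exact: ler_wpM2l.
Qed.

Let norm_convex_comb_le (F : nat -> R) c : (forall k, `|F k| <= c) ->
  `|\sum_(k < n) w k * F k| <= c.
Proof.
move=> Fc; apply: (le_trans (ler_norm_sum _ _ _)).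
under eq_bigr do rewrite normrM ger0_norm//.
exact: (convex_comb_le (fun k => `|F k|)).
Qed.

Lemma pr_weighted_rest_ge (a : R) : 0 < a ->
  pr P [set x | a <= `|\sum_(k < n) w k * (Z k x - stair r N (Z k x))|] <= (r + eta) / a.
Proof.
move=> a0; have lW : (fun x => \sum_(k < n) w k * V k x) \in Lfun P 1.
  by apply: Lfun1_sum => k _; exact: rpredZ.
have lWk k : (fun x => w k * `|V k x|) \in Lfun P 1 by exact/rpredZ/Lfun_norm.
apply: (le_trans (markov_Ex P _ a (Lfun_norm lW) (fun x => normr_ge0 _) a0)).
rewrite ler_pM2r ?invr_gt0//.
apply: (@le_trans _ _ (Ex P (fun x => \sum_(k < n) w k * `|V k x|))).
  apply: ler_Ex => [||x]; [exact: Lfun_norm|exact: Lfun1_sum|].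
  apply: (le_trans (ler_norm_sum _ _ _)).
  by apply: ler_sum => k _; rewrite normrM ger0_norm.
rewrite Ex_sum//; under eq_bigr do rewrite ExZ ?Lfun_norm//.
apply: (convex_comb_le (fun k => Ex P (fun x => `|V k x|))) => k.
apply: (le_trans (Ex_dist_stair_le P _ _ _ _ (lZ k) r_gt0 B_lt)).
by rewrite lerD2l.
Qed.

Let norm_Ex_U_le k : `|Ex P (U k)| <= r + eta.
Proof.
apply: (le_trans (norm_Ex_stair_le P _ _ _ _ (lZ k) r_gt0 B_lt (EZ0 k))).
by rewrite lerD2l.
Qed.

Let lUU k l : (fun x => U k x * U l x) \in Lfun P 1.
Proof.
apply: (Lfun1_bounded P _ ((N%:R * r) * (N%:R * r))).
  by apply: measurable_funM; apply: measurableT_comp (measurable_stair r N) _.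
by move=> x; rewrite normrM ler_pM// norm_stair_le.
Qed.

Lemma Ex_sqr_weighted_stair_le :
  Ex P (fun x => (\sum_(k < n) w k * stair r N (Z k x)) ^+ 2) <=
  (r + eta) ^+ 2 + \sum_(k < n) w k ^+ 2 * Ex P (fun x => stair r N (Z k x) ^+ 2).
Proof.
pose mu k := Ex P (U k); pose nu k := Ex P (fun x => U k x ^+ 2).
have EUU k l : k != l -> Ex P (fun x => U k x * U l x) = mu k * mu l.
  move=> kl; have mS := measurable_stair_step r N.
  exact: (Ex_indic_combM_indep P _ _ _ _ _ _ _ _ _ _ (mZ k) (mZ l) (indepZ _ _ kl) mS mS).
have -> : Ex P (fun x => (\sum_(k < n) w k * U k x) ^+ 2) =
    \sum_(k < n) \sum_(l < n) (w k * w l) * Ex P (fun x => U k x * U l x).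
  rewrite (_ : (fun x => _ ^+ 2) = (fun x => \sum_(k < n) \sum_(l < n)
      (w k * w l) * (U k x * U l x))); last first.
    apply: funext => x; rewrite expr2 mulr_suml; apply: eq_bigr => k _.
    by rewrite mulr_sumr; apply: eq_bigr => l _; ring.
  rewrite Ex_sum => [|k _]; last by apply: Lfun1_sum => l _; exact: rpredZ.
  apply: eq_bigr => k _; rewrite Ex_sum => [|l _]; last exact: rpredZ.
  by apply: eq_bigr => l _; rewrite ExZ.
have split_diag (k : 'I_n) :
    \sum_(l < n) (w k * w l) * Ex P (fun x => U k x * U l x) =
    \sum_(l < n) (w k * mu k) * (w l * mu l) + w k ^+ 2 * (nu k - mu k ^+ 2).
  rewrite (bigD1 k)//= [X in _ = X + _](bigD1 k)//=.
  rewrite (eq_bigr (fun l : 'I_n => (w k * mu k) * (w l * mu l))) => [|l lk]; last first.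
    by rewrite EUU 1?eq_sym//; rewrite /mu; ring.
  have -> : Ex P (fun x => U k x * U k x) = nu k.
    by congr Ex; apply: funext => x; rewrite expr2.
  by ring.
rewrite (eq_bigr _ (fun k _ => split_diag k)) big_split /=.
under eq_bigr do rewrite -big_distrr /=.
rewrite -big_distrl /= -expr2 lerD//.
  have mu_le : `|\sum_(k < n) w k * mu k| <= r + eta.
    exact: norm_convex_comb_le.
  rewrite -real_normK ?num_real// lerXn2r ?nnegrE//.
  exact: le_trans mu_le.
apply: ler_sum => k _; rewrite ler_wpM2l ?exprn_ge0// lerBlDr lerDl.
exact: sqr_ge0.
Qed.

Lemma pr_weighted_sum_gt (a : R) : 0 < a ->
  pr P [set x | 2 * a < `|\sum_(k < n) w k * Z k x|] <=
  ((r + eta) ^+ 2 + \sum_(k < n) w k ^+ 2 * Ex P (fun x => stair r N (Z k x) ^+ 2))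
    / a ^+ 2 + (r + eta) / a.
Proof.
move=> a0; pose Y x := \sum_(k < n) w k * U k x.
pose W x := \sum_(k < n) w k * V k x.
have mY : measurable_fun setT Y.
  by apply: (Lfun1_measurable P); apply: Lfun1_sum => k _; exact: rpredZ.
have mW : measurable_fun setT W.
  by apply: (Lfun1_measurable P); apply: Lfun1_sum => k _; exact: rpredZ.
have lY2 : (fun x => Y x ^+ 2) \in Lfun P 1.
  apply: (Lfun1_bounded P _ ((N%:R * r) ^+ 2)); first exact: measurable_funX.
  move=> x; rewrite normrX lerXn2r ?nnegrE//; first by rewrite mulr_ge0// ltW.
  by apply: (norm_convex_comb_le (U^~ x)) => k; exact: norm_stair_le.
have mge (f : T -> R) : measurable_fun setT f -> measurable [set x | a <= `|f x|].
  by move=> mf; apply/measurable_ge_set/measurableT_comp; first exact: normr_measurable.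
apply: (@le_trans _ _ (pr P ([set x | a <= `|Y x|] `|` [set x | a <= `|W x|]))).
  apply: le_pr; [|exact: measurableU (mge _ mY) (mge _ mW)|].
    apply/measurable_gt_set/measurableT_comp; first exact: normr_measurable.
    by apply: (Lfun1_measurable P); apply: Lfun1_sum => k _; exact: rpredZ.
  move=> x /= Sx; have [Yx|Yx] := leP a `|Y x|; first by left.
  have [Wx|Wx] := leP a `|W x|; first by right.
  move: Sx; have -> : \sum_(k < n) w k * Z k x = Y x + W x.
    by rewrite -big_split; apply: eq_bigr => k _; rewrite /= -mulrDr /V addrC subrK.
  by have := ler_normD (Y x) (W x); lra.
apply: (le_trans (prU2 P _ _ (mge _ mY) (mge _ mW))); apply: lerD.
  apply: (le_trans (chebyshev_Ex P _ a mY lY2 a0)).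
  by rewrite ler_pM2r ?invr_gt0 ?exprn_gt0// Ex_sqr_weighted_stair_le.
exact: pr_weighted_rest_ge.
Qed.

End weighted_sum.

Lemma sum_sqr_weights_le {R : realType} (n : nat) (m nu : nat -> R) (L A c : R) :
  (forall k, 0 <= m k) -> 0 < \sum_(k < n) m k ->
  (forall k, 0 <= nu k <= A) -> (forall k, L <= m k -> nu k <= c) ->
  0 <= L -> 0 <= c ->
  \sum_(k < n) (m k / \sum_(j < n) m j) ^+ 2 * nu k <=
  A * (L / \sum_(j < n) m j) + c.
Proof.
set M := \sum_(j < n) m j => m_ge0 M_gt0 nu_le nu_le_c L_ge0 c_ge0.
have w_ge0 k : 0 <= m k / M by rewrite divr_ge0// ltW.
have w_sum1 : \sum_(k < n) m k / M = 1 by rewrite -mulr_suml divff// gt_eqF.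
have w_le1 (k : 'I_n) : m k / M <= 1.
  by rewrite -w_sum1 (bigD1 k)//= lerDl sumr_ge0.
have A_ge0 : 0 <= A by have /andP[] := nu_le 0%N; exact: le_trans.
rewrite -[leRHS]mul1r -w_sum1 mulr_suml; apply: ler_sum => k _.
have /andP[nu_ge0 nu_leA] := nu_le k.
rewrite expr2 -mulrA ler_wpM2l//.
have [mL|Lm] := ltP (m k) L.
  have wL : m k / M <= L / M by rewrite ler_pM2r ?invr_gt0// ltW.
  apply: (@le_trans _ _ (L / M * A)); first exact: ler_pM.
  by rewrite mulrC lerDl.
apply: (@le_trans _ _ (nu k)); first by rewrite ler_piMl.
by rewrite (le_trans (nu_le_c k Lm))// lerDr mulr_ge0// divr_ge0// ltW.
Qed.

Lemma ereal_sup_cvg0_le {R : realType} {I : Type} {S : set I} {u : R -> I -> \bar R} :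
  ereal_sup [set u x i | i in S] @[x --> +oo] --> 0%E ->
  forall e : R, 0 < e -> exists M, forall x i, M < x -> S i -> (u x i <= e%:E)%E.
Proof.
move=> /fine_cvgP[sup_fin sup_cvg] e e0.
have sup_le : \forall x \near +oo, (ereal_sup [set u x i | i in S] <= e%:E)%E.
  apply: filterS2 sup_fin (cvgr_dist_le _ _ sup_cvg e e0) => x x_fin.
  rewrite sub0r normrN /= => /(le_trans (ler_norm _)).
  by rewrite -lee_fin fineK.
have [M [_ M_le]] := sup_le.
by exists M => x i Mx Si; apply: le_trans (M_le x Mx); apply: ereal_sup_ubound; exists i.
Qed.

Lemma pr_cvg0 {d} {T : measurableType d} {R : realType} (P : probability T R)
    (S : nat -> set T) : (forall n, measurable (S n)) ->
  (forall e : R, 0 < e -> \forall n \near \oo, pr P (S n) <= e) ->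
  P (S n) @[n --> \oo] --> 0%E.
Proof.
move=> mS pr_le; apply/fine_cvgP; split.
  by apply: nearW => n; rewrite (prE P _ (mS n)).
apply/cvgrPdist_le => e e0; apply: filterS (pr_le e e0) => n.
by rewrite /= sub0r normrN ger0_norm// pr_ge0.
Qed.

Section weak_law.
Context {d} {T : measurableType d} {R : realType} (P : probability T R).
Variables (Z : nat -> T -> R) (m : nat -> R).
Hypotheses (lZ : forall k, Z k \in Lfun P 1) (EZ0 : forall k, Ex P (Z k) = 0).
Hypothesis indepZ : forall k l, k != l -> indep2 P (Z k) (Z l).
Hypothesis uniform_tail : forall e : R, 0 < e -> exists B, forall k, tail_mean P (Z k) B <= e.
Hypothesis uniform_small : forall e th : R, 0 < e -> 0 < th ->
  exists L, forall k, L <= m k -> pr P [set x | e < `|Z k x|] <= th.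
Hypotheses (m_gt0 : forall k, 0 < m k)
  (M_cvg : (fun n => \sum_(k < n) m k) @ \oo --> +oo).

Lemma pr_weighted_sum_le (n N : nat) (a r B L th : R) :
  0 < a -> 0 < r -> B < N%:R * r -> (forall k, tail_mean P (Z k) B <= r) ->
  0 <= L -> 0 <= th -> (forall k, L <= m k -> pr P [set x | r < `|Z k x|] <= th) ->
  0 < \sum_(j < n) m j ->
  pr P [set x | 2 * a < `|\sum_(k < n) (m k / \sum_(j < n) m j) * Z k x|] <=
  (8 * r ^+ 2 + (N%:R * r) ^+ 2 * (L / \sum_(j < n) m j + th)) / a ^+ 2 + 2 * r / a.
Proof.
set M := \sum_(j < n) m j; set A := N%:R * r.
move=> a0 r0 B_lt tailB L_ge0 th_ge0 smallL M_gt0.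
have w_ge0 k : 0 <= m k / M by rewrite divr_ge0// ltW.
have w_sum1 : \sum_(k < n) m k / M = 1 by rewrite -mulr_suml divff// gt_eqF.
apply: (le_trans (pr_weighted_sum_gt P n (fun k => m k / M) Z r B r N
  w_ge0 w_sum1 lZ EZ0 indepZ r0 B_lt tailB a a0)).
have S_le : \sum_(k < n) (m k / M) ^+ 2 * Ex P (fun x => stair r N (Z k x) ^+ 2)
    <= A ^+ 2 * (L / M) + (4 * r ^+ 2 + A ^+ 2 * th).
  apply: (@sum_sqr_weights_le _ n m (fun k => Ex P (fun x => stair r N (Z k x) ^+ 2)))
    => [k|//|k|k Lm|//|].
  - exact: ltW.
  - rewrite Ex_sqr_stair_le ?andbT//; apply: Ex_ge0 => x; exact: sqr_ge0.
  - apply: (le_trans (Ex_sqr_stair_le_tail P _ r N (lZ k) r0)).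
    by rewrite lerD2l ler_wpM2l ?sqr_ge0// smallL.
  - by rewrite addr_ge0// mulr_ge0 ?sqr_ge0.
rewrite (_ : 2 * r = r + r); last by ring.
rewrite lerD2r ler_pM2r ?invr_gt0 ?exprn_gt0// (_ : (r + r) ^+ 2 = 4 * r ^+ 2); last by ring.
by move: S_le; rewrite mulrDr; lra.
Qed.

Lemma weighted_weak_law (eps delta : R) : 0 < eps -> 0 < delta ->
  \forall n \near \oo,
    pr P [set x | eps < `|\sum_(k < n) (m k / \sum_(j < n) m j) * Z k x|] <= delta.
Proof.
move=> eps0 delta0; pose a := eps / 2; have a0 : 0 < a by rewrite divr_gt0.
(* with r = a t the bound below is 8 t^2 + 2 t + delta / 2 <= delta *)
pose t := Order.min 1 (delta / 20).
have t0 : 0 < t by rewrite lt_min ltr01 divr_gt0.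
have t_le1 : t <= 1 by rewrite ge_min lexx.
have t_le : t <= delta / 20 by rewrite ge_min lexx orbT.
pose r := a * t; have r0 : 0 < r by rewrite mulr_gt0.
have [B tailB] := uniform_tail _ r0.
pose N := (Num.Def.trunc (B / r)).+1.
have B_lt : B < N%:R * r by rewrite -ltr_pdivrMr// truncnS_gt.
pose A := N%:R * r; have A0 : 0 < A by rewrite mulr_gt0// ltr0n.
pose th := delta * a ^+ 2 / (4 * A ^+ 2).
have th0 : 0 < th by rewrite !mulr_gt0 ?invr_gt0 ?mulr_gt0 ?exprn_gt0.
have [L smallL] := uniform_small _ _ r0 th0; pose L0 := Num.max L 0.
have smallL0 k : L0 <= m k -> pr P [set x | r < `|Z k x|] <= th.
  by move=> L0m; apply: smallL; apply: le_trans L0m; rewrite le_max lexx.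
have da_gt0 : 0 < delta * a ^+ 2 / 4 by rewrite !mulr_gt0 ?exprn_gt0.
have /cvgryPge M_large := M_cvg.
apply: filterS (M_large (Num.max 1 (A ^+ 2 * L0 / (delta * a ^+ 2 / 4)))) => n.
set M := \sum_(j < n) m j; rewrite ge_max => /andP[M_ge1 M_ge].
have M_gt0 : 0 < M by exact: lt_le_trans M_ge1.
have L0_ge0 : 0 <= L0 by rewrite le_max lexx orbT.
have := pr_weighted_sum_le n N a r B L0 th a0 r0 B_lt tailB L0_ge0 (ltW th0) smallL0 M_gt0.
rewrite (_ : 2 * a = eps); last by rewrite /a mulrC divfK.
move/le_trans; apply; rewrite -/A -/M.
have L0_le : A ^+ 2 * (L0 / M) <= delta * a ^+ 2 / 4.
  by move: M_ge; rewrite ler_pdivrMr// => M_ge; rewrite mulrA ler_pdivrMr//; lra.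
have th_eq : A ^+ 2 * th = delta * a ^+ 2 / 4.
  by rewrite /th; field; rewrite ?mulf_neq0 ?expf_neq0 ?gt_eqF.
have -> : 2 * r / a = 2 * t by rewrite /r; field; rewrite gt_eqF.
have : (8 * r ^+ 2 + A ^+ 2 * (L0 / M + th)) / a ^+ 2 <= 8 * t ^+ 2 + delta / 2.
  rewrite ler_pdivrMr ?exprn_gt0// /r exprMn mulrDr th_eq.
  by move: L0_le; lra.
have : t ^+ 2 <= t by rewrite expr2 ler_piMl// ltW.
lra.
Qed.

End weak_law.

Theorem theorem2p1 (d : measure_display) (T : measurableType d) (R : realType)
  (P : probability T R) (X : nat -> R -> {RV P >-> R}) :
  (forall k m, 0 < m -> P.-integrable setT (EFin \o X k m)) ->
  indep_in_k P (fun k m => X k m : T -> R) ->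
  (* (C) *)
  (forall k m, 0 < m -> ('E_P[X k m] = 0)%E) ->
  (* (W1) *)
  (forall eps : R, 0 < eps ->
     ereal_sup [set P [set w | eps < `|X k m w|] | k in [set: nat]]
       @[m --> +oo] --> 0%E) ->
  (* (W2) *)
  (ereal_sup [set (\int[P]_(w in [set w | (A < `|X km.1 km.2 w|)%R]) (`|X km.1 km.2 w|)%:E)%E
               | km in [set km : nat * R | 0 < km.2]]
     @[A --> +oo%R] --> 0%E) ->
  forall mseq : nat -> R, (forall k, 0 < mseq k) ->
    (fun n => \sum_(k < n) mseq k) @ \oo --> +oo ->
    forall eps : R, 0 < eps ->
      P [set w | eps < `|\sum_(k < n) (mseq k / \sum_(j < n) mseq j) * X k (mseq k) w|]
        @[n --> \oo] --> 0%E.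
Proof.
move=> intX indepX centX W1 W2 m m_gt0 M_cvg eps eps0.
pose Z k : T -> R := X k (m k).
have lZ k : Z k \in Lfun P 1 by apply/Lfun1_integrable/intX.
apply: pr_cvg0 => [n|delta delta0].
  apply: (measurable_gt_set eps (measurableT_comp (@normr_measurable R setT) _)).
  by apply: (Lfun1_measurable P); apply: Lfun1_sum => k _; apply: rpredZ; exact: lZ.
apply: (weighted_weak_law _ _ _ lZ _ _ _ _ m_gt0 M_cvg _ _ eps0 delta0).
- by move=> k; rewrite /Ex centX.
- by move=> k l kl; exact: (indep_in_k_indep2 _ _ _ _ _ _ indepX kl (m_gt0 k) (m_gt0 l)).
- move=> e e0; have [B tailB] := ereal_sup_cvg0_le W2 _ e0.
  exists (B + 1) => k; rewrite -lee_fin tail_meanE//.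
  by apply: (tailB _ (k, m k)) => /=; rewrite ?ltrDl ?m_gt0.
- move=> e th e0 th0; have [L smallL] := ereal_sup_cvg0_le (W1 e e0) _ th0.
  exists (L + 1) => k mk; rewrite -lee_fin -prE; last first.
    by apply/measurable_gt_set/measurableT_comp; first exact: normr_measurable.
  by apply: (smallL (m k) k); rewrite ?(lt_le_trans _ mk) ?ltrDl.
Qed.
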